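(* Let $\{\triangleright\}\subseteq\sigma\subseteq\{\triangleright,\wedge,\mathrm{upd},\sqcup\}$. Then the class of $\sigma$-algebras that have a meet-complete representation by partial functions is a basic elementary class, axiomatisable by a single universal-existential-universal first-order sentence.
   Context: The operations are interpreted on partial functions as: $f \triangleright g = \{(x,y) \in g : x \notin \mathrm{dom}(f)\}$ (antidomain restriction); $f\wedge g = f\cap g$; $\mathrm{upd}(f,g)(x)$ is $f(x)$ if $f(x)$ defined and $g(x)$ undefined, $g(x)$ if both defined, undefined otherwise (update); $(f\sqcup g)(x)$ is $f(x)$ if defined, else $g(x)$ (preferential union). A representation by partial functions is an isomorphism onto an algebra of partial functions (on some base set) with these operations. Define $0 := a\triangleright a$, $a\lhd b := (a\triangleright b)\triangleright b$, $a \le b :\iff a\lhd b = a$; for representable algebras this is a partial order and $a\le b\iff\theta(a)\subseteq\theta(b)$ for every representation $\theta$. A representation $\theta$ is meet complete if $\theta(\bigwedge S)=\bigcap\theta[S]$ for every nonempty $S$ whose meet exists in $(\mathcal{A},\le)$. A basic elementary class is the class of models of a single first-order sentence. *)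

From Stdlib Require Import List Arith.
Import ListNotations.

Inductive Op : Type := ADom (* antidomain restriction |> *) | Meet | Upd | PJoin.

Definition Sig := Op -> bool.
Definition Sym (sigma : Sig) : Type := { o : Op | sigma o = true }.

Definition ops_on (sigma : Sig) (A : Type) : Type := Sym sigma -> A -> A -> A.

Inductive term (sigma : Sig) : Type :=
| Var : nat -> term sigma
| App : Sym sigma -> term sigma -> term sigma -> term sigma.
Arguments Var {sigma} _.
Arguments App {sigma} _ _ _.

Inductive form (sigma : Sig) : Type :=
| FEq : term sigma -> term sigma -> form sigma
| FFalse : form sigma
| FNot : form sigma -> form sigma
| FAnd : form sigma -> form sigma -> form sigma
| FOr : form sigma -> form sigma -> form sigma
| FImp : form sigma -> form sigma -> form sigma
| FAll : nat -> form sigma -> form sigma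
| FEx : nat -> form sigma -> form sigma.
Arguments FEq {sigma} _ _.
Arguments FFalse {sigma}.
Arguments FNot {sigma} _.
Arguments FAnd {sigma} _ _.
Arguments FOr {sigma} _ _.
Arguments FImp {sigma} _ _.
Arguments FAll {sigma} _ _.
Arguments FEx {sigma} _ _.

Fixpoint term_fv {sigma} (t : term sigma) : list nat :=
  match t with
  | Var n => [n]
  | App _ t1 t2 => term_fv t1 ++ term_fv t2
  end.

Fixpoint form_fv {sigma} (f : form sigma) : list nat :=
  match f with
  | FEq t1 t2 => term_fv t1 ++ term_fv t2
  | FFalse => []
  | FNot g => form_fv g
  | FAnd g h | FOr g h | FImp g h => form_fv g ++ form_fv h
  | FAll n g | FEx n g => remove Nat.eq_dec n (form_fv g)
  end.

Definition closed {sigma} (f : form sigma) : Prop := form_fv f = [].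

Fixpoint quantifier_free {sigma} (f : form sigma) : Prop :=
  match f with
  | FEq _ _ | FFalse => True
  | FNot g => quantifier_free g
  | FAnd g h | FOr g h | FImp g h => quantifier_free g /\ quantifier_free h
  | FAll _ _ | FEx _ _ => False
  end.

Definition alls {sigma} (xs : list nat) (f : form sigma) : form sigma :=
  fold_right FAll f xs.
Definition exs {sigma} (xs : list nat) (f : form sigma) : form sigma :=
  fold_right FEx f xs.

Definition AEA_form {sigma} (f : form sigma) : Prop :=
  exists (xs ys zs : list nat) (psi : form sigma),
    quantifier_free psi /\ f = alls xs (exs ys (alls zs psi)).

Definition env_upd {A : Type} (e : nat -> A) (n : nat) (a : A) : nat -> A :=
  fun m => if Nat.eqb m n then a else e m.

Fixpoint eval_term {sigma} {A : Type} (ops : ops_on sigma A) (e : nat -> A)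
  (t : term sigma) : A :=
  match t with
  | Var n => e n
  | App o t1 t2 => ops o (eval_term ops e t1) (eval_term ops e t2)
  end.

Fixpoint sat {sigma} {A : Type} (ops : ops_on sigma A) (e : nat -> A)
  (f : form sigma) : Prop :=
  match f with
  | FEq t1 t2 => eval_term ops e t1 = eval_term ops e t2
  | FFalse => False
  | FNot g => ~ sat ops e g
  | FAnd g h => sat ops e g /\ sat ops e h
  | FOr g h => sat ops e g \/ sat ops e h
  | FImp g h => sat ops e g -> sat ops e h
  | FAll n g => forall a : A, sat ops (env_upd e n a) g
  | FEx n g => exists a : A, sat ops (env_upd e n a) g
  end.

Definition models {sigma} {A : Type} (ops : ops_on sigma A) (f : form sigma) : Prop :=
  forall e : nat -> A, sat ops e f.

Definition pfun (X : Type) : Type := X -> X -> Prop.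
Definition functional {X} (f : pfun X) : Prop :=
  forall x y z, f x y -> f x z -> y = z.
Definition pdom {X} (f : pfun X) (x : X) : Prop := exists y, f x y.
Definition peq {X} (f g : pfun X) : Prop := forall x y, f x y <-> g x y.

Definition interp_op {X} (o : Op) (f g : pfun X) : pfun X :=
  match o with
  | ADom  => fun x y => g x y /\ ~ pdom f x
  | Meet  => fun x y => f x y /\ g x y
  | Upd   => fun x y => (f x y /\ ~ pdom g x) \/ (pdom f x /\ g x y)
  | PJoin => fun x y => f x y \/ (~ pdom f x /\ g x y)
  end.

Definition is_rep {sigma} {A : Type} (ops : ops_on sigma A) (X : Type)
  (theta : A -> pfun X) : Prop :=
  (forall a, functional (theta a)) /\
  (forall a b, peq (theta a) (theta b) -> a = b) /\
  (forall (o : Sym sigma) a b,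
      peq (theta (ops o a b)) (interp_op (proj1_sig o) (theta a) (theta b))).

Definition adom {sigma} {A : Type} (H : sigma ADom = true) (ops : ops_on sigma A)
  : A -> A -> A := ops (exist _ ADom H).

Definition ale {sigma} {A : Type} (H : sigma ADom = true) (ops : ops_on sigma A)
  (a b : A) : Prop :=
  adom H ops (adom H ops a b) b = a.

Definition is_meet {sigma} {A : Type} (H : sigma ADom = true) (ops : ops_on sigma A)
  (S : A -> Prop) (m : A) : Prop :=
  (forall s, S s -> ale H ops m s) /\
  (forall l, (forall s, S s -> ale H ops l s) -> ale H ops l m).

Definition meet_complete {sigma} {A : Type} (H : sigma ADom = true)
  (ops : ops_on sigma A) (X : Type) (theta : A -> pfun X) : Prop :=
  forall (S : A -> Prop) (m : A), (exists s, S s) -> is_meet H ops S m ->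
    peq (theta m) (fun x y => forall s, S s -> theta s x y).

Definition has_meet_complete_rep {sigma} {A : Type} (H : sigma ADom = true)
  (ops : ops_on sigma A) : Prop :=
  exists (X : Type) (theta : A -> pfun X), is_rep ops X theta /\ meet_complete H ops X theta.

(* Let an *atom* of a sigma-algebra be a nonzero p such that, for every c, the
   domain of p is either contained in or disjoint from the domain of c; both
   notions are expressed with |> alone (restrict, defined_on).  An atom plays the
   role of a point: value_at a p is "a at that point".

   - Completeness: if the atom laws hold (each operation acts on values at an
     atom as the corresponding partial-function operation does, value_at is
     compatible with the order) and distinct elements are separated by an atom,
     then a |-> {(p, value_at a p) | p atom, a defined on p} is a meet-complete
     representation on the set of atoms.
   - Soundness: in a representation the atom laws hold pointwise; meet
     completeness forces every point of every element to lie in an atom below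
     it (otherwise 0 would be a meet that is too small), which yields separation.
   - Syntax: the axioms become a sentence forall a b p, exists c p', forall c',
     psi, where c refutes atomicity of a non-atom p and c' ranges over the
     universal part of the atomicity of the separating atom p'. *)
From Stdlib Require Import List Arith Classical Eqdep_dec Bool.
Import ListNotations.

Lemma pdom_peq {T} (f g : pfun T) x : peq f g -> (pdom f x <-> pdom g x).
Proof. intros Hfg. split; intros [y Hy]; exists y; apply Hfg; exact Hy. Qed.


Lemma in_pdom {T} (f : pfun T) x y : f x y -> pdom f x.
Proof. intros Hy; exists y; exact Hy. Qed.

Lemma pdom_adom {T} (f g : pfun T) x :
  pdom (interp_op ADom f g) x <-> pdom g x /\ ~ pdom f x.
Proof.
  split; [intros [y [Hg Hf]] | intros [[y Hg] Hf]];
    [split; [exists y |] | exists y; split]; assumption.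
Qed.

Lemma pdom_upd {T} (f g : pfun T) x : pdom (interp_op Upd f g) x <-> pdom f x.
Proof.
  split; [intros [y [[Hf _] | [Hf _]]]; [exists y|] ; assumption |].
  intros [y Hf]. destruct (classic (pdom g x)) as [[z Hg] | Ng].
  - exists z. right. split; [exists y |]; assumption.
  - exists y. left. split; assumption.
Qed.

Lemma pdom_pjoin {T} (f g : pfun T) x :
  pdom (interp_op PJoin f g) x <-> pdom f x \/ pdom g x.
Proof.
  split; [intros [y [Hf | [_ Hg]]]; [left | right]; exists y; assumption |].
  intros Hfg. destruct (classic (pdom f x)) as [[y Hf] | Nf].
  - exists y. left. exact Hf.
  - destruct Hfg as [Hf | [y Hg]]; [contradiction | exists y; right; split; assumption].
Qed.

Lemma functional_agree {T} (f g : pfun T) x w y :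
  functional f -> functional g -> f x w -> g x w -> (f x y <-> g x y).
Proof.
  intros Ff Fg Hf Hg. split; intro Hy.
  - rewrite (Ff x y w Hy Hf). exact Hg.
  - rewrite (Fg x y w Hy Hg). exact Hf.
Qed.

Section AtomNotions.
Context {sigma : Sig} (H : sigma ADom = true) {A : Type} (ops : ops_on sigma A).

Definition restrict (c a : A) : A := adom H ops (adom H ops c a) a.

Definition defined_on (a p : A) : Prop := restrict a p = p.

Definition value_at (a p : A) : A := restrict p a.

Definition atom (p : A) : Prop :=
  p <> adom H ops p p /\
  forall c, restrict c p = p \/ restrict c p = adom H ops p p.

Definition atom_witness (p c : A) : Prop :=
  p <> adom H ops p p /\
  (restrict c p = p \/ restrict c p = adom H ops p p).

Lemma atom_iff_witness p : atom p <-> forall c, atom_witness p c.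
Proof.
  split.
  - intros [Hnz Hdich] c. exact (conj Hnz (Hdich c)).
  - intros Hw. split; [exact (proj1 (Hw p)) | intro c; exact (proj2 (Hw c))].
Qed.

Definition atom_law_op (s : Sym sigma) (a b p : A) : Prop :=
  let u := ops s a b in
  match proj1_sig s with
  | ADom => ((defined_on u p -> defined_on b p /\ ~ defined_on a p) /\
             (defined_on b p /\ ~ defined_on a p -> defined_on u p)) /\
            (defined_on u p -> value_at u p = value_at b p)
  | Meet => ((defined_on u p -> defined_on a p /\ (defined_on b p /\ value_at a p = value_at b p)) /\
             (defined_on a p /\ (defined_on b p /\ value_at a p = value_at b p) -> defined_on u p)) /\
            (defined_on u p -> value_at u p = value_at a p)
  | Upd => ((defined_on u p -> defined_on a p) /\ (defined_on a p -> defined_on u p)) /\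
           ((defined_on a p /\ ~ defined_on b p -> value_at u p = value_at a p) /\
            (defined_on a p /\ defined_on b p -> value_at u p = value_at b p))
  | PJoin => ((defined_on u p -> defined_on a p \/ defined_on b p) /\
              (defined_on a p \/ defined_on b p -> defined_on u p)) /\
             ((defined_on a p -> value_at u p = value_at a p) /\
              (~ defined_on a p /\ defined_on b p -> value_at u p = value_at b p))
  end.

Definition atom_law_order (a b p : A) : Prop :=
  (ale H ops a b /\ defined_on a p -> defined_on b p /\ value_at a p = value_at b p) /\
  ((defined_on a p -> defined_on (value_at a p) p) /\
   (value_at (value_at a p) p = value_at a p /\ ale H ops (value_at a p) a)).

Definition separates (a b p : A) : Prop :=
  ~ ((defined_on a p -> defined_on b p) /\ (defined_on b p -> defined_on a p)) \/
  (defined_on a p /\ ~ value_at a p = value_at b p).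

Definition atom_axioms : Prop :=
  (forall a b p, atom p -> (forall s, atom_law_op s a b p) /\ atom_law_order a b p) /\
  (forall a b, (exists p, atom p /\ separates a b p) \/ a = b).

End AtomNotions.

Section Completeness.
Context {sigma : Sig} (H : sigma ADom = true) {A : Type} (ops : ops_on sigma A).
Hypothesis laws : forall a b p, atom H ops p ->
  (forall s, atom_law_op H ops s a b p) /\ atom_law_order H ops a b p.
Hypothesis separation : forall a b, (exists p, atom H ops p /\ separates H ops a b p) \/ a = b.

Definition atom_rep (a : A) : pfun A :=
  fun p v => atom H ops p /\ defined_on H ops a p /\ v = value_at H ops a p.

Lemma pdom_atom_rep a p :
  pdom (atom_rep a) p <-> atom H ops p /\ defined_on H ops a p.
Proof.
  unfold pdom, atom_rep; split.
  - intros [v [Hp [Hd _]]]; exact (conj Hp Hd).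
  - intros [Hp Hd]; exists (value_at H ops a p); exact (conj Hp (conj Hd eq_refl)).
Qed.

Lemma atom_rep_at c p v : atom H ops p ->
  (atom_rep c p v <-> defined_on H ops c p /\ v = value_at H ops c p).
Proof. unfold atom_rep; tauto. Qed.

Lemma atom_rep_hom (s : Sym sigma) a b :
  peq (atom_rep (ops s a b)) (interp_op (proj1_sig s) (atom_rep a) (atom_rep b)).
Proof.
  intros p v.
  destruct (classic (atom H ops p)) as [Hp | Hp].
  2: { destruct s as [[] e]; cbn; rewrite ?pdom_atom_rep; unfold atom_rep; tauto. }
  destruct (laws a b p Hp) as [Hs _]. specialize (Hs s).
  destruct s as [[] e]; cbn in Hs |- *; rewrite ?pdom_atom_rep, !atom_rep_at by exact Hp.
  all: set (u := ops _ a b) in *.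
  all: destruct (classic (defined_on H ops a p)), (classic (defined_on H ops b p)).
  all: split; [intros [? ->] | intros ?; intuition subst]; intuition congruence.
Qed.

Lemma atom_rep_functional a : functional (atom_rep a).
Proof. intros p v w [_ [_ ->]] [_ [_ ->]]; reflexivity. Qed.

Lemma atom_rep_injective a b : peq (atom_rep a) (atom_rep b) -> a = b.
Proof.
  intros Heq. destruct (separation a b) as [[p [Hp Hsep]] | ->]; [exfalso | reflexivity].
  pose proof (fun v => Heq p v) as Hv.
  setoid_rewrite atom_rep_at in Hv; [|exact Hp..].
  destruct Hsep as [Hd | [Da Hne]].
  - apply Hd; split; intro D; [apply (Hv (value_at H ops a p)) | apply (Hv (value_at H ops b p))]; auto.
  - apply Hne. apply (Hv (value_at H ops a p)); auto.
Qed.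

(* A point (p, v) common to all of S is a lower bound of S (as v = value_at s p
   lies below each s), hence below the meet m, and then it is a point of m. *)
Lemma atom_rep_meet_complete : meet_complete H ops A atom_rep.
Proof.
  intros S m [s0 Hs0] [Hlow Hgreatest] p v; split.
  - intros [Hp [Dm ->]] s Hs.
    destruct (laws m s p Hp) as [_ [Hmono _]].
    destruct (Hmono (conj (Hlow s Hs) Dm)) as [Ds Heq].
    exact (conj Hp (conj Ds Heq)).
  - intros Hall. destruct (Hall s0 Hs0) as [Hp [Ds0 ->]].
    destruct (laws s0 s0 p Hp) as [_ [_ [Hdom [Hidem _]]]].
    assert (Hle : ale H ops (value_at H ops s0 p) m).
    { apply Hgreatest. intros s Hs. destruct (Hall s Hs) as [_ [_ ->]].
      apply (laws s s p Hp). }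
    destruct (laws (value_at H ops s0 p) m p Hp) as [_ [Hmono _]].
    destruct (Hmono (conj Hle (Hdom Ds0))) as [Dm Heq].
    refine (conj Hp (conj Dm _)). rewrite <- Heq; symmetry; exact Hidem.
Qed.

Lemma atom_rep_complete : has_meet_complete_rep H ops.
Proof.
  exists A, atom_rep. split; [split; [|split] |].
  - exact atom_rep_functional.
  - exact atom_rep_injective.
  - apply atom_rep_hom.
  - exact atom_rep_meet_complete.
Qed.
End Completeness.

Section Soundness.
Context {sigma : Sig} (H : sigma ADom = true) {A : Type} (ops : ops_on sigma A).
Context {X : Type} (R : A -> pfun X).
Hypothesis R_functional : forall a, functional (R a).
Hypothesis R_injective : forall a b, peq (R a) (R b) -> a = b.
Hypothesis R_hom : forall s a b, peq (R (ops s a b)) (interp_op (proj1_sig s) (R a) (R b)).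

Lemma R_eq a b : a = b <-> peq (R a) (R b).
Proof. split; [intros -> x y; reflexivity | apply R_injective]. Qed.

Lemma R_adom a b x y : R (adom H ops a b) x y <-> R b x y /\ ~ pdom (R a) x.
Proof. exact (R_hom (exist _ ADom H) a b x y). Qed.

Lemma R_restrict c a x y : R (restrict H ops c a) x y <-> R a x y /\ pdom (R c) x.
Proof.
  unfold restrict. rewrite R_adom. split.
  - intros [Ha Hn]. split; [exact Ha|]. apply NNPP; intro Hc.
    apply Hn. exists y. apply R_adom. auto.
  - intros [Ha Hc]. split; [exact Ha|]. intros [y' Hy']. apply R_adom in Hy'. tauto.
Qed.

Lemma R_zero p x y : ~ R (adom H ops p p) x y.
Proof. rewrite R_adom. intros [Hp Hn]. apply Hn. exists y; exact Hp. Qed.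

Lemma R_defined_on a p :
  defined_on H ops a p <-> (forall x, pdom (R p) x -> pdom (R a) x).
Proof.
  unfold defined_on. rewrite R_eq. split.
  - intros Heq x [y Hy]. apply Heq, R_restrict in Hy. tauto.
  - intros Hsub x y. rewrite R_restrict. split; [tauto|].
    intros Hy. split; [exact Hy|]. apply Hsub. exists y; exact Hy.
Qed.

Lemma R_value_at a p x y : R (value_at H ops a p) x y <-> R a x y /\ pdom (R p) x.
Proof. apply R_restrict. Qed.

Lemma R_value_at_eq a b p :
  value_at H ops a p = value_at H ops b p <->
  (forall x y, pdom (R p) x -> (R a x y <-> R b x y)).
Proof.
  rewrite R_eq. split.
  - intros Heq x y Hx. specialize (Heq x y). rewrite !R_value_at in Heq. tauto.
  - intros Hagree x y. rewrite !R_value_at.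
    split; intros [Hy Hx]; split; try apply (Hagree x y Hx); assumption.
Qed.

Lemma R_ale a b : ale H ops a b <-> (forall x y, R a x y -> R b x y).
Proof.
  change (restrict H ops a b = a <-> (forall x y, R a x y -> R b x y)).
  rewrite R_eq. split.
  - intros Heq x y Hy. apply Heq, R_restrict in Hy. tauto.
  - intros Hsub x y. rewrite R_restrict. split.
    + intros [Hb [y' Ha]]. rewrite (R_functional b x y y' Hb (Hsub x y' Ha)). exact Ha.
    + intros Ha. split; [apply Hsub; exact Ha | exists y; exact Ha].
Qed.

Lemma R_atom p :
  atom H ops p <->
  (exists x, pdom (R p) x) /\
  forall c, (forall x, pdom (R p) x -> pdom (R c) x) \/
            (forall x, pdom (R p) x -> ~ pdom (R c) x).
Proof.
  unfold atom. split.
  - intros [Hnz Hdich]. split.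
    + apply NNPP; intro Hempty. apply Hnz, R_eq. intros x y. split.
      * intro Hy. exfalso. apply Hempty. exists x, y. exact Hy.
      * intro Hy. exfalso. exact (R_zero p x y Hy).
    + intro c. destruct (Hdich c) as [Hin | Hout]; [left; apply R_defined_on, Hin | right].
      intros x [y Hy] Hc. apply (R_zero p x y). rewrite <- Hout, R_restrict. auto.
  - intros [[x0 [y0 Hy0]] Hdich]. split.
    + intro Hz. apply (R_zero p x0 y0). rewrite <- Hz. exact Hy0.
    + intro c. destruct (Hdich c) as [Hin | Hout]; [left; apply R_defined_on, Hin | right].
      apply R_eq. intros x y. rewrite R_restrict. split.
      * intros [Hy Hc]. exfalso. apply (Hout x); [exists y |]; assumption.
      * intro Hy. exfalso. exact (R_zero p x y Hy).
Qed.

Lemma R_defined_on_atom p x c :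
  atom H ops p -> pdom (R p) x -> (defined_on H ops c p <-> pdom (R c) x).
Proof.
  intros Hp Hx. rewrite R_defined_on. apply R_atom in Hp as [_ Hdich].
  split; [intro Hsub; exact (Hsub x Hx) |].
  intro Hc. destruct (Hdich c) as [Hin | Hout]; [exact Hin | exfalso; exact (Hout x Hx Hc)].
Qed.

Section AtAnAtom.
Variables (p : A) (x0 : X).
Hypothesis p_atom : atom H ops p.
Hypothesis x0_in_p : pdom (R p) x0.

Lemma defined_on_at_point c : defined_on H ops c p <-> pdom (R c) x0.
Proof. exact (R_defined_on_atom p x0 c p_atom x0_in_p). Qed.

Lemma dom_uniform c x : pdom (R p) x -> (pdom (R c) x0 <-> pdom (R c) x).
Proof.
  intros Hx. rewrite <- defined_on_at_point. exact (R_defined_on_atom p x c p_atom Hx).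
Qed.

Lemma sound_adom e a b : atom_law_op H ops (exist _ ADom e) a b p.
Proof.
  pose proof (R_hom (exist _ ADom e) a b) as Hu; cbn [proj1_sig] in Hu.
  unfold atom_law_op; cbn. set (u := ops _ a b) in *.
  rewrite !defined_on_at_point, !R_value_at_eq, (pdom_peq _ _ x0 Hu), pdom_adom.
  split; [tauto |].
  intros [_ Na] x y Hx. rewrite (dom_uniform a x Hx) in Na. rewrite (Hu x y). cbn. tauto.
Qed.

Lemma sound_meet e a b : atom_law_op H ops (exist _ Meet e) a b p.
Proof.
  pose proof (R_hom (exist _ Meet e) a b) as Hu; cbn [proj1_sig] in Hu.
  unfold atom_law_op; cbn. set (u := ops _ a b) in *.
  rewrite !defined_on_at_point, !R_value_at_eq.
  assert (Hagree : pdom (R u) x0 -> forall x y, pdom (R p) x -> (R a x y <-> R b x y)).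
  { intros Du x y Hx. rewrite (dom_uniform u x Hx) in Du. destruct Du as [w Hw].
    apply Hu in Hw as [Ha Hb].
    exact (functional_agree _ _ x w y (R_functional a) (R_functional b) Ha Hb). }
  split; [split|].
  - intros Du. split; [|split]; [| |exact (Hagree Du)];
      destruct Du as [w Hw]; apply Hu in Hw as [Ha Hb]; exists w; assumption.
  - intros [[y Ha] [_ Hab]]. exists y. apply Hu. split; [|apply (Hab x0 y x0_in_p)]; exact Ha.
  - intros Du x y Hx. rewrite (Hu x y); cbn. split; [tauto|]. intros Ha. split; [exact Ha|].
    apply (Hagree Du x y Hx), Ha.
Qed.

Lemma sound_upd e a b : atom_law_op H ops (exist _ Upd e) a b p.
Proof.
  pose proof (R_hom (exist _ Upd e) a b) as Hu; cbn [proj1_sig] in Hu.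
  unfold atom_law_op; cbn. set (u := ops _ a b) in *.
  rewrite !defined_on_at_point, !R_value_at_eq, (pdom_peq _ _ x0 Hu), pdom_upd.
  split; [|split]; [tauto | intros [_ Nb] | intros [Da Db]]; intros x y Hx; rewrite (Hu x y); cbn.
  - rewrite (dom_uniform b x Hx) in Nb. pose proof (in_pdom (R b) x y). tauto.
  - rewrite (dom_uniform a x Hx) in Da. rewrite (dom_uniform b x Hx) in Db. tauto.
Qed.

Lemma sound_pjoin e a b : atom_law_op H ops (exist _ PJoin e) a b p.
Proof.
  pose proof (R_hom (exist _ PJoin e) a b) as Hu; cbn [proj1_sig] in Hu.
  unfold atom_law_op; cbn. set (u := ops _ a b) in *.
  rewrite !defined_on_at_point, !R_value_at_eq, (pdom_peq _ _ x0 Hu), pdom_pjoin.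
  split; [|split]; [tauto | intros Da | intros [Na _]]; intros x y Hx; rewrite (Hu x y); cbn.
  - rewrite (dom_uniform a x Hx) in Da. tauto.
  - rewrite (dom_uniform a x Hx) in Na. pose proof (in_pdom (R a) x y). tauto.
Qed.

Lemma sound_order a b : atom_law_order H ops a b p.
Proof.
  unfold atom_law_order. rewrite !R_ale, !defined_on_at_point, !R_value_at_eq.
  split; [|split; [|split]].
  - intros [Hab [w Hw]]. split; [exists w; exact (Hab x0 w Hw) |].
    intros x y Hx. pose proof (in_pdom _ _ _ Hw) as Da. rewrite (dom_uniform a x Hx) in Da.
    destruct Da as [w' Hw'].
    apply (functional_agree _ _ x w' y (R_functional a) (R_functional b) Hw'), Hab, Hw'.
  - intros [w Hw]. exists w. apply R_value_at. split; assumption.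
  - intros x y Hx. rewrite R_value_at. tauto.
  - intros x y. rewrite R_value_at. tauto.
Qed.

End AtAnAtom.

Lemma sound_laws a b p : atom H ops p ->
  (forall s, atom_law_op H ops s a b p) /\ atom_law_order H ops a b p.
Proof.
  intros Hp. destruct (proj1 (proj1 (R_atom p) Hp)) as [x0 Hx0]. split.
  - intros [[] e];
      [ apply (sound_adom p x0) | apply (sound_meet p x0)
      | apply (sound_upd p x0) | apply (sound_pjoin p x0) ]; assumption.
  - exact (sound_order p x0 Hp Hx0 a b).
Qed.

Hypothesis R_meet_complete : meet_complete H ops X R.

Definition below_at (a : A) (x : X) (c : A) : Prop := ale H ops c a /\ pdom (R c) x.

Lemma lower_bound_atom a x l :
  pdom (R a) x -> (forall c, below_at a x c -> ale H ops l c) -> pdom (R l) x -> atom H ops l.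
Proof.
  intros Ha Hlow Hl.
  assert (Hla : forall x' y', R l x' y' -> R a x' y').
  { apply R_ale, Hlow. split; [apply R_ale; auto | exact Ha]. }
  apply R_atom. split; [exists x; exact Hl | intro c].
  destruct (classic (pdom (R c) x)) as [Hc | Nc]; [left | right].
  - assert (Hsub : ale H ops l (restrict H ops c l)).
    { apply Hlow. split.
      - apply R_ale. intros x' y' Hy'. apply R_restrict in Hy' as [Hy' _]. auto.
      - destruct Hl as [y Hy]. exists y. apply R_restrict. auto. }
    rewrite R_ale in Hsub. intros x' [y' Hy']. apply Hsub, R_restrict in Hy'. tauto.
  - assert (Hsub : ale H ops l (adom H ops c l)).
    { apply Hlow. split.
      - apply R_ale. intros x' y' Hy'. apply R_adom in Hy' as [Hy' _]. auto.
      - destruct Hl as [y Hy]. exists y. apply R_adom. auto. }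
    rewrite R_ale in Hsub. intros x' [y' Hy']. apply Hsub, R_adom in Hy'. tauto.
Qed.

(* Meet completeness: every point of every element lies in an atom below it.
   Otherwise 0 would be the meet of below_at a x, yet all of them contain (x, y). *)
Lemma atom_below_point a x y :
  R a x y -> exists p, atom H ops p /\ ale H ops p a /\ pdom (R p) x.
Proof.
  intros Hxy. apply NNPP. intros Hno.
  assert (Ha : below_at a x a) by (split; [apply R_ale; auto | exists y; exact Hxy]).
  assert (Hmeet : is_meet H ops (below_at a x) (adom H ops a a)).
  { split.
    - intros c _. apply R_ale. intros x' y' Hz. contradiction (R_zero a x' y' Hz).
    - intros l Hlow. apply R_ale. intros x' y' Hl. exfalso.
      destruct (classic (pdom (R l) x)) as [Hlx | Nlx].
      + apply Hno. exists l.
        exact (conj (lower_bound_atom a x l (in_pdom _ _ _ Hxy) Hlow Hlx) (conj (Hlow a Ha) Hlx)).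
      + assert (Hsub : ale H ops l (adom H ops l a)).
        { apply Hlow. split; [apply R_ale; intros x'' y'' H''; apply R_adom in H''; tauto |].
          exists y. apply R_adom. auto. }
        rewrite R_ale in Hsub. pose proof (Hsub x' y' Hl) as Hz. apply R_adom in Hz as [_ Nl].
        exact (Nl (in_pdom _ _ _ Hl)). }
  apply (R_zero a x y), (R_meet_complete _ _ (ex_intro _ a Ha) Hmeet).
  intros c [Hc [w Hw]]. rewrite R_ale in Hc.
  rewrite (R_functional a x y w Hxy (Hc x w Hw)). exact Hw.
Qed.

Lemma separating_atom a b x y :
  R a x y -> ~ R b x y ->
  exists p, atom H ops p /\ separates H ops a b p /\ separates H ops b a p.
Proof.
  intros Ha Nb. destruct (atom_below_point a x y Ha) as [p [Hp [Hpa Hx]]].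
  exists p. split; [exact Hp |]. unfold separates.
  assert (Da : defined_on H ops a p).
  { rewrite R_ale in Hpa. apply R_defined_on. intros x' [y' Hy']. exists y'. auto. }
  assert (Hne : value_at H ops a p <> value_at H ops b p).
  { rewrite R_value_at_eq. intros Heq. apply Nb, (Heq x y Hx), Ha. }
  destruct (classic (defined_on H ops b p)) as [Db | Ndb].
  - split; right; split; auto.
  - split; left; tauto.
Qed.

Lemma sound_separation a b :
  (exists p, atom H ops p /\ separates H ops a b p) \/ a = b.
Proof.
  destruct (classic (a = b)) as [-> | Hne]; [right; reflexivity | left].
  rewrite R_eq in Hne. apply not_all_ex_not in Hne as [x Hne].
  apply not_all_ex_not in Hne as [y Hne].
  destruct (classic (R a x y)) as [Ha | Na].
  - destruct (separating_atom a b x y Ha) as [p [Hp [Hsep _]]]; [tauto |].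
    exists p; auto.
  - destruct (separating_atom b a x y) as [p [Hp [_ Hsep]]]; [tauto | tauto |].
    exists p; auto.
Qed.

End Soundness.

(* Terms and formulas expressing the notions above, written so that their
   satisfaction is definitionally the corresponding semantic notion. *)
Section Syntax.
Context {sigma : Sig} (H : sigma ADom = true).

Definition t_adom (a b : term sigma) : term sigma := App (exist _ ADom H) a b.
Definition t_restrict (c a : term sigma) : term sigma := t_adom (t_adom c a) a.
Definition t_value_at (a p : term sigma) : term sigma := t_restrict p a.
Definition f_defined_on (a p : term sigma) : form sigma := FEq (t_restrict a p) p.
Definition f_ale (a b : term sigma) : form sigma := FEq (t_restrict a b) a.
Definition f_iff (f g : form sigma) : form sigma := FAnd (FImp f g) (FImp g f).

Definition f_atom_witness (p c : term sigma) : form sigma :=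
  FAnd (FNot (FEq p (t_adom p p)))
       (FOr (FEq (t_restrict c p) p) (FEq (t_restrict c p) (t_adom p p))).

Definition f_law_op (s : Sym sigma) (a b p : term sigma) : form sigma :=
  let u := App s a b in
  let D c := f_defined_on c p in
  let VEq c d := FEq (t_value_at c p) (t_value_at d p) in
  match proj1_sig s with
  | ADom => FAnd (f_iff (D u) (FAnd (D b) (FNot (D a)))) (FImp (D u) (VEq u b))
  | Meet => FAnd (f_iff (D u) (FAnd (D a) (FAnd (D b) (VEq a b)))) (FImp (D u) (VEq u a))
  | Upd => FAnd (f_iff (D u) (D a))
                (FAnd (FImp (FAnd (D a) (FNot (D b))) (VEq u a))
                      (FImp (FAnd (D a) (D b)) (VEq u b)))
  | PJoin => FAnd (f_iff (D u) (FOr (D a) (D b)))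
                  (FAnd (FImp (D a) (VEq u a))
                        (FImp (FAnd (FNot (D a)) (D b)) (VEq u b)))
  end.

Definition f_law_order (a b p : term sigma) : form sigma :=
  let D c := f_defined_on c p in
  let V c := t_value_at c p in
  FAnd (FImp (FAnd (f_ale a b) (D a)) (FAnd (D b) (FEq (V a) (V b))))
       (FAnd (FImp (D a) (D (V a)))
             (FAnd (FEq (V (V a)) (V a)) (f_ale (V a) a))).

Definition f_separates (a b p : term sigma) : form sigma :=
  FOr (FNot (f_iff (f_defined_on a p) (f_defined_on b p)))
      (FAnd (f_defined_on a p) (FNot (FEq (t_value_at a p) (t_value_at b p)))).
End Syntax.

Definition opt_sym (sigma : Sig) (o : Op) : option (Sym sigma) :=
  match bool_dec (sigma o) true with
  | left e => Some (exist _ o e)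
  | right _ => None
  end.

Definition syms (sigma : Sig) : list (Sym sigma) :=
  flat_map (fun o => match opt_sym sigma o with Some s => [s] | None => [] end)
    [ADom; Meet; Upd; PJoin].

Lemma syms_complete sigma (s : Sym sigma) : In s (syms sigma).
Proof.
  destruct s as [o e].
  assert (Hopt : opt_sym sigma o = Some (exist _ o e)).
  { unfold opt_sym. destruct (bool_dec (sigma o) true) as [e' | Ne]; [| contradiction].
    rewrite (UIP_dec bool_dec e' e). reflexivity. }
  apply in_flat_map. exists o. split; [destruct o; simpl; tauto | rewrite Hopt; left; reflexivity].
Qed.

Fixpoint f_conj {sigma} (l : list (form sigma)) : form sigma :=
  match l with
  | [] => FImp FFalse FFalse
  | f :: l => FAnd f (f_conj l)
  end.

Lemma qf_conj {sigma} (l : list (form sigma)) :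
  (forall f, In f l -> quantifier_free f) -> quantifier_free (f_conj l).
Proof.
  induction l as [| f l IH]; intros Hl; cbn; [tauto |].
  split; [apply Hl; left; reflexivity | apply IH; intros g Hg; apply Hl; right; exact Hg].
Qed.

Lemma fv_conj {sigma} (l : list (form sigma)) V :
  (forall f, In f l -> incl (form_fv f) V) -> incl (form_fv (f_conj l)) V.
Proof.
  induction l as [| f l IH]; intros Hl; cbn; [intros n [] |].
  apply incl_app; [apply Hl; left; reflexivity | apply IH; intros g Hg; apply Hl; right; exact Hg].
Qed.

Lemma incl_by_check (l V : list nat) :
  forallb (fun n => existsb (Nat.eqb n) V) l = true -> incl l V.
Proof.
  intros Hl n Hn. rewrite forallb_forall in Hl. apply Hl, existsb_exists in Hn.
  destruct Hn as [m [Hm E]]. apply Nat.eqb_eq in E. subst m. exact Hm.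
Qed.

Lemma fv_alls {sigma} xs (f : form sigma) n :
  In n (form_fv (alls xs f)) -> In n (form_fv f) /\ ~ In n xs.
Proof.
  induction xs as [| x xs IH]; cbn; [tauto |].
  intros Hn. apply in_remove in Hn as [Hn Hx]. apply IH in Hn as [Hf Hxs].
  split; [exact Hf | intros [-> | Hin]; [apply Hx; reflexivity | exact (Hxs Hin)]].
Qed.

Lemma fv_exs {sigma} ys (f : form sigma) n :
  In n (form_fv (exs ys f)) -> In n (form_fv f) /\ ~ In n ys.
Proof.
  induction ys as [| y ys IH]; cbn; [tauto |].
  intros Hn. apply in_remove in Hn as [Hn Hy]. apply IH in Hn as [Hf Hys].
  split; [exact Hf | intros [-> | Hin]; [apply Hy; reflexivity | exact (Hys Hin)]].
Qed.

Lemma closed_prenex {sigma} xs ys zs (f : form sigma) :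
  incl (form_fv f) (xs ++ ys ++ zs) -> closed (alls xs (exs ys (alls zs f))).
Proof.
  intros Hf. unfold closed.
  destruct (form_fv (alls xs (exs ys (alls zs f)))) as [| n l] eqn:E; [reflexivity | exfalso].
  assert (Hn : In n (form_fv (alls xs (exs ys (alls zs f))))) by (rewrite E; left; reflexivity).
  apply fv_alls in Hn as [Hn Nx]. apply fv_exs in Hn as [Hn Ny]. apply fv_alls in Hn as [Hn Nz].
  apply Hf in Hn. rewrite !in_app_iff in Hn. tauto.
Qed.

Section Sentence.
Context {sigma : Sig} (H : sigma ADom = true).

(* Variables: 0,1 = a,b;  3 = p, 4 = its non-atomicity witness c;
   5 = separating atom p', 6 = c' ranging over all elements. *)
Definition psi : form sigma :=
  FAnd (FOr (FNot (f_atom_witness H (Var 3) (Var 4)))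
            (FAnd (f_conj (map (fun s => f_law_op H s (Var 0) (Var 1) (Var 3)) (syms sigma)))
                  (f_law_order H (Var 0) (Var 1) (Var 3))))
       (FOr (FAnd (f_atom_witness H (Var 5) (Var 6)) (f_separates H (Var 0) (Var 1) (Var 5)))
            (FEq (Var 0) (Var 1))).

Definition phi : form sigma := alls [0; 1; 3] (exs [4; 5] (alls [6] psi)).

Lemma psi_quantifier_free : quantifier_free psi.
Proof.
  cbn. repeat split. apply qf_conj. intros f Hf.
  apply in_map_iff in Hf as [[[] e] [<- _]]; cbn; tauto.
Qed.

Lemma psi_variables : incl (form_fv psi) [0; 1; 3; 4; 5; 6].
Proof.
  unfold psi. cbn [form_fv]. repeat apply incl_app; try (apply incl_by_check; reflexivity).
  apply fv_conj. intros f Hf. apply in_map_iff in Hf as [[[] e] [<- _]];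
    apply incl_by_check; reflexivity.
Qed.

Lemma phi_closed : closed phi.
Proof. apply closed_prenex, psi_variables. Qed.

Lemma phi_AEA : AEA_form phi.
Proof. exists [0; 1; 3], [4; 5], [6], psi. split; [exact psi_quantifier_free | reflexivity]. Qed.

Lemma sat_conj {A} (ops : ops_on sigma A) e (l : list (form sigma)) :
  sat ops e (f_conj l) <-> (forall f, In f l -> sat ops e f).
Proof.
  induction l as [| f l IH]; cbn; [split; [intros _ f [] | tauto] |].
  rewrite IH. split; [intros [Hf Hl] g [<- | Hg]; auto | intros Hl; split; auto].
Qed.

Lemma sat_psi {A} (ops : ops_on sigma A) e :
  sat ops e psi <->
  ((~ atom_witness H ops (e 3) (e 4)) \/
     ((forall s, atom_law_op H ops s (e 0) (e 1) (e 3)) /\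
      atom_law_order H ops (e 0) (e 1) (e 3))) /\
  ((atom_witness H ops (e 5) (e 6) /\ separates H ops (e 0) (e 1) (e 5)) \/ e 0 = e 1).
Proof.
  unfold psi. cbn [sat]. rewrite sat_conj.
  assert (Hlaws :
    (forall f, In f (map (fun s => f_law_op H s (Var 0) (Var 1) (Var 3)) (syms sigma)) ->
               sat ops e f) <->
    (forall s, atom_law_op H ops s (e 0) (e 1) (e 3))).
  { split.
    - intros Hall [[] e']; apply (Hall (f_law_op H (exist _ _ e') (Var 0) (Var 1) (Var 3)));
        apply (in_map (fun s => f_law_op H s (Var 0) (Var 1) (Var 3))), syms_complete.
    - intros Hall f Hf. apply in_map_iff in Hf as [[[] e'] [<- _]]; exact (Hall (exist _ _ e')). }
  rewrite Hlaws. reflexivity.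
Qed.

(* A non-atom is refuted by some c; an atom satisfies the laws: either way the
   first conjunct of psi has a witness c. *)
Lemma law_witness {A} (ops : ops_on sigma A) a b p :
  atom_axioms H ops ->
  exists c, ~ atom_witness H ops p c \/
    ((forall s, atom_law_op H ops s a b p) /\ atom_law_order H ops a b p).
Proof.
  intros [Hlaws _]. destruct (classic (atom H ops p)) as [Hp | Np].
  - exists p. right. exact (Hlaws a b p Hp).
  - rewrite atom_iff_witness in Np. apply not_all_ex_not in Np as [c Nc]. exists c. left. exact Nc.
Qed.

Lemma models_phi {A} (ops : ops_on sigma A) : models ops phi <-> atom_axioms H ops.
Proof.
  unfold models, phi, alls, exs. cbn [fold_right sat]. split.
  - intros Hm. split.
    + intros a b p Hp. destruct (Hm (fun _ => a) a b p) as [c [p' Hc]].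
      specialize (Hc a). apply sat_psi in Hc as [[Nw | Hl] _]; [| exact Hl].
      contradiction (Nw (proj1 (atom_iff_witness H ops p) Hp c)).
    + intros a b. destruct (Hm (fun _ => a) a b a) as [c [p' Hc]].
      destruct (classic (a = b)) as [Eab | Nab]; [right; exact Eab | left].
      assert (Hsep : forall c', atom_witness H ops p' c' /\ separates H ops a b p').
      { intros c'. specialize (Hc c'). apply sat_psi in Hc as [_ [Hs | Eab]]; [exact Hs | contradiction]. }
      exists p'. split; [apply atom_iff_witness; intro c'; apply Hsep | exact (proj2 (Hsep a))].
  - intros Hax e a b p. destruct (law_witness ops a b p Hax) as [c Hc].
    destruct (proj2 Hax a b) as [[p' [Hp' Hsep]] | Eab].
    + exists c, p'. intros c'. apply sat_psi. cbn.
      split; [exact Hc | left; split; [apply atom_iff_witness, Hp' | exact Hsep]].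
    + exists c, a. intros c'. apply sat_psi. cbn.
      split; [exact Hc | right; exact Eab].
Qed.

End Sentence.

Theorem theorem7p1 (sigma : Sig) (H : sigma ADom = true) :
  exists phi : form sigma,
    closed phi /\ AEA_form phi /\
    forall (A : Type) (ops : ops_on sigma A),
      models ops phi <-> has_meet_complete_rep H ops.
Proof.
  exists (phi H). split; [exact (phi_closed H) | split; [exact (phi_AEA H) |]].
  intros A ops. rewrite models_phi. split.
  - intros [Hlaws Hsep]. exact (atom_rep_complete H ops Hlaws Hsep).
  - intros [X [R [[Rfun [Rinj Rhom]] Rmeet]]]. split.
    + exact (sound_laws H ops R Rfun Rinj Rhom).
    + exact (sound_separation H ops R Rfun Rinj Rhom Rmeet).
Qed.
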